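(* Let $P$ be a nilpotent linear operator on a finite-dimensional real or complex symplectic vector space $(V, B)$ which is self-adjoint with respect to $B$. Then every subspace $W \subset V$ invariant under the group $\mathrm{Aut}(V, B, P)$ has the form $W = \bigoplus_{i=1}^s (\operatorname{Ker} P^{k_i} \cap \operatorname{Im} P^{l_i})$ for some $s \in \mathbb{N}$ and integers $k_i, l_i \geq 0$.
   Context: $P$ self-adjoint with respect to $B$ means $B(Pu, v) = B(u, Pv)$ for all $u, v$. $\mathrm{Aut}(V, B, P)$ is the group of linear automorphisms of $V$ preserving $B$ and commuting with $P$ (equivalently, preserving both $B$ and $A(u,v) = B(Pu,v)$). *)

(* Vectors of V = F^n are row vectors 'rV[F]_n; linear
   operators and bilinear forms are n x n matrices acting on row vectors. *)
From HB Require Import structures.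
From mathcomp Require Import all_boot all_order all_algebra.
From mathcomp Require Import reals.
From mathcomp Require Export complex.
Set Implicit Arguments. Unset Strict Implicit. Unset Printing Implicit Defensive.
Import Order.TTheory GRing.Theory Num.Theory.
Local Open Scope ring_scope.

Section Defs.
Variables (F : fieldType) (n : nat).

Definition bform (M : 'M[F]_n) (u v : 'rV[F]_n) : F := (u *m M *m v^T) 0 0.

Definition app (A : 'M[F]_n) (u : 'rV[F]_n) : 'rV[F]_n := u *m A.

Definition symplectic (M : 'M[F]_n) : Prop :=
  (forall u, bform M u u = 0) /\ M \in unitmx.

Definition self_adjoint (M P : 'M[F]_n) : Prop :=
  forall u v, bform M (app P u) v = bform M u (app P v).

Definition nilpotent (P : 'M[F]_n) : Prop := exists k : nat, P ^+ k = 0.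

Definition in_Aut (M P g : 'M[F]_n) : Prop :=
  [/\ g \in unitmx,
      (forall u v, bform M (app g u) (app g v) = bform M u v) &
      (forall u, app g (app P u) = app P (app g u))].

Definition Aut_invariant (M P W : 'M[F]_n) : Prop :=
  forall g, in_Aut M P g -> forall u : 'rV[F]_n, (u <= W)%MS -> (app g u <= W)%MS.

(* Ker P^k and Im P^l as subspaces (row spaces) of V. *)
Definition KerPow (P : 'M[F]_n) (k : nat) : 'M[F]_n := kermx (P ^+ k).
Definition ImPow (P : 'M[F]_n) (l : nat) : 'M[F]_n := P ^+ l.

Definition theorem7_over : Prop :=
  forall (M P W : 'M[F]_n),
    symplectic M -> nilpotent P -> self_adjoint M P ->
    Aut_invariant M P W ->
    exists (s : nat) (k l : 'I_s -> nat),
      (W == \sum_(i < s) (KerPow P (k i) :&: ImPow P (l i)))%MS.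

End Defs.

From mathcomp Require Import all_boot all_order all_algebra reals complex.
From mathcomp Require Import zify.
Set Implicit Arguments. Unset Strict Implicit. Unset Printing Implicit Defensive.
Import GRing.Theory Num.Theory.
Local Open Scope ring_scope.

(* For z with z P^(m+1) = 0, the map
     x |-> x + sum_(i <= m) B(x P^i, z) z P^(m-i)
   lies in Aut(V, B, P); this needs B(z P^a, z P^b) = 0, which holds because
   B(z P^(a+b), z) is both symmetric and skew in char <> 2.
   Let u in W, u P^(h+1) = 0 and z = u P^h <> 0, and let l be maximal with
   z in Im P^(h+l).  As Im P^k is the B-orthogonal of Ker P^k, some w in
   Ker P^(h+l+1) has B(z, w) <> 0.  Applying the maps above (with z := w, and
   polarized in z) to u and eliminating triangularly shows
   Ker P^(h+1) :&: Im P^l <= W.  Now z = a P^h for some a in that piece, and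
   u - a has smaller height, so induction on the height writes W as the sum
   of the pieces Ker P^k :&: Im P^l it contains. *)

Section SubmxFacts.
Variables (F : fieldType) (m n : nat) (W : 'M[F]_(m, n)).

Lemma submx_addr p (A B : 'M[F]_(p, n)) :
  (B <= W)%MS -> ((A + B)%R <= W)%MS = (A <= W)%MS.
Proof.
move=> sBW; apply/idP/idP => sAW; last exact: addmx_sub.
by rewrite -(addrK B A) addmx_sub ?eqmx_opp.
Qed.

Lemma mulmx_exprD p (u : 'M[F]_(p, n)) (A : 'M[F]_n) a b :
  u *m A ^+ (a + b) = u *m A ^+ a *m A ^+ b.
Proof. by rewrite exprD -mulmxE mulmxA. Qed.

Lemma mulmx_expr_eq0_le (u : 'rV[F]_n) (A : 'M[F]_n) k i :
  u *m A ^+ k = 0 -> (k <= i)%N -> u *m A ^+ i = 0.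
Proof. by move=> uk ki; rewrite -(subnKC ki) mulmx_exprD uk mul0mx. Qed.

Lemma exists_max_ImX (A : 'M[F]_n) k0 (z : 'rV[F]_n) h :
  A ^+ k0 = 0 -> z != 0 -> (z <= A ^+ h)%MS ->
  exists l, [/\ (h + l < k0)%N, (z <= A ^+ (h + l))%MS
              & ~~ (z <= A ^+ (h + l).+1)%MS].
Proof.
move=> Ak0 zn0 zh.
have zNk j : (k0 <= j)%N -> ~~ (z <= A ^+ j)%MS.
  by move=> kj; rewrite -(subnKC kj) exprD Ak0 mul0r submx0.
pose inImX j := (z <= A ^+ (h + j))%MS.
have ub j : inImX j -> (j <= k0)%N.
  rewrite /inImX; case: (leqP k0 (h + j)) => [kj|]; last lia.
  by rewrite (negPf (zNk _ kj)).
have [|l zl lmax] := ex_maxnP (ex_intro inImX 0%N _) ub; first by rewrite /inImX addn0.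
exists l; split => //.
- by rewrite ltnNge; apply: contraL zl => /zNk.
- by apply/negP => zl1; have := lmax l.+1; rewrite /inImX addnS zl1 ltnn => /(_ isT).
Qed.

(* Back-substitution for a triangular system whose diagonal coefficient is c H. *)
Lemma sub_triangular (c : nat -> F) (v : nat -> 'rV[F]_n) H K :
  c H != 0 -> (forall k, (K <= k)%N -> v k = 0) ->
  (forall k, ((\sum_(i < H.+1) c i *: v (k + (H - i))%N)%R <= W)%MS) ->
  forall k, (v k <= W)%MS.
Proof.
move=> cH vK sv k; have : (K <= k + (K - k))%N by lia.
move: (K - k)%N => d; elim: d k => [|d IH] k hk; first by rewrite vK ?sub0mx // -(addn0 k).
have := sv k; rewrite big_ord_recr /= subnn addn0 addrC submx_addr.
  by rewrite (eqmx_scale _ cH).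
by apply: summx_sub => i _; apply/scalemx_sub/IH; have := ltn_ord i; lia.
Qed.

End SubmxFacts.

Section BilinearForm.
Variables (F : fieldType) (n : nat) (M : 'M[F]_n).
Local Notation B := (bform M).
Implicit Types u v w : 'rV[F]_n.

Lemma eq_bform (A C : 'M[F]_n) :
  (forall u v, bform A u v = bform C u v) -> A = C.
Proof.
move=> eqAC; apply/matrixP => i j; have := eqAC (delta_mx 0 i) (delta_mx 0 j).
by rewrite /bform -!rowE trmx_delta -!colE !mxE.
Qed.

Lemma bformDl u v w : B (u + v) w = B u w + B v w.
Proof. by rewrite /bform !mulmxDl mxE. Qed.

Lemma bformDr u v w : B u (v + w) = B u v + B u w.
Proof. by rewrite /bform linearD /= mulmxDr mxE. Qed.

Lemma bformZl a u v : B (a *: u) v = a * B u v.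
Proof. by rewrite /bform -!scalemxAl mxE. Qed.

Lemma bformZr a u v : B u (a *: v) = a * B u v.
Proof. by rewrite /bform linearZ /= -scalemxAr mxE. Qed.

Lemma bform0l v : B 0 v = 0.
Proof. by rewrite /bform !mul0mx mxE. Qed.

Lemma bform0r u : B u 0 = 0.
Proof. by rewrite /bform trmx0 mulmx0 mxE. Qed.

Lemma bform_suml I r (p : pred I) (G : I -> 'rV_n) v :
  B (\sum_(i <- r | p i) G i) v = \sum_(i <- r | p i) B (G i) v.
Proof. exact: (big_morph (B^~ v) (fun x y => bformDl x y v) (bform0l v)). Qed.

Lemma bform_sumr I r (p : pred I) u (G : I -> 'rV_n) :
  B u (\sum_(i <- r | p i) G i) = \sum_(i <- r | p i) B u (G i).
Proof. exact: (big_morph (B u) (bformDr u) (bform0r u)). Qed.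

Lemma bform_skew : (forall u, B u u = 0) -> forall u v, B u v = - B v u.
Proof.
move=> alt u v; have := alt (u + v).
rewrite !bformDl !bformDr !alt add0r addr0 => /eqP.
by rewrite addr_eq0 => /eqP.
Qed.

End BilinearForm.

Section SelfAdjoint.
Variables (F : fieldType) (n : nat) (M P : 'M[F]_n).
Hypothesis adjP : self_adjoint M P.
Hypothesis M_unit : M \in unitmx.
Local Notation B := (bform M).
Implicit Types u v w x y z : 'rV[F]_n.

Lemma bform_adjX k u v : B (u *m P ^+ k) v = B u (v *m P ^+ k).
Proof.
elim: k u v => [|k IH] u v; first by rewrite expr0 !mulmx1.
rewrite {1}exprS -mulmxE mulmxA IH.
by have := adjP u (v *m P ^+ k); rewrite /app => ->; rewrite -mulmxA mulmxE -exprSr.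
Qed.

Lemma mulmx_adjX k : P ^+ k *m M = M *m (P ^+ k)^T.
Proof.
apply: eq_bform => u v; have := bform_adjX k u v.
by rewrite /bform trmx_mul !mulmxA.
Qed.

Lemma ImX_orthogonal_KerX k :
  (P ^+ k == kermx (M *m (kermx (P ^+ k))^T))%MS.
Proof.
have sub_orth : (P ^+ k <= kermx (M *m (kermx (P ^+ k))^T))%MS.
  apply/sub_kermxP.
  by rewrite mulmxA mulmx_adjX -mulmxA -trmx_mul mulmx_ker trmx0 mulmx0.
rewrite -(mxrank_leqif_eq sub_orth).2 mxrank_ker.
rewrite (eqmxMfull _ _) ?row_full_unit // mxrank_tr mxrank_ker subKn //.
exact: rank_leq_row.
Qed.

Lemma KerX_witness k z : ~~ (z <= P ^+ k)%MS ->
  exists2 w, w *m P ^+ k = 0 & B z w != 0.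
Proof.
set K := kermx (P ^+ k) => zNk.
have /existsP[i zKi] : [exists i, (z *m (M *m K^T)) 0 i != 0].
  apply: contraR zNk => /existsPn zK0.
  rewrite (eqmxP (ImX_orthogonal_KerX k)); apply/sub_kermxP/rowP => i.
  by rewrite [RHS]mxE; apply/eqP/negbNE.
exists (row i K); first by rewrite -row_mul mulmx_ker row0.
by rewrite /bform tr_row colE !mulmxA -colE mxE -mulmxA.
Qed.

Section Alternating.
Hypothesis alt : forall u, B u u = 0.
Hypothesis two_neq0 : (2%:R : F) != 0.

Lemma bform_orbit0 z a b : B (z *m P ^+ a) (z *m P ^+ b) = 0.
Proof.
rewrite -bform_adjX -mulmx_exprD; set s := B _ z.
have s_opp : s = - s by rewrite {1}/s bform_adjX bform_skew.
have : 2%:R * s = 0 by rewrite mulr_natl mulr2n {1}s_opp addNr.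
by move/eqP; rewrite mulf_eq0 (negbTE two_neq0) => /eqP.
Qed.

(* The automorphism of the header is 1 + shear m z. *)
Definition shear m z : 'M[F]_n :=
  \sum_(i < m.+1) P ^+ i *m M *m z^T *m (z *m P ^+ (m - i)).

Lemma shear_vec m z x :
  x *m shear m z = \sum_(i < m.+1) B (x *m P ^+ i) z *: (z *m P ^+ (m - i)).
Proof.
rewrite mulmx_sumr; apply: eq_bigr => i _.
by rewrite /bform -mul_scalar_mx -mx11_scalar !mulmxA.
Qed.

Lemma shear_trunc m z u H : u *m P ^+ H.+1 = 0 -> (H <= m)%N ->
  u *m shear m z = \sum_(i < H.+1) B (u *m P ^+ i) z *: (z *m P ^+ (m - i)).
Proof.
move=> uH Hm; rewrite shear_vec.
rewrite [RHS](big_ord_widen m.+1 (fun i => B (u *m P ^+ i) z *: (z *m P ^+ (m - i)))) //.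
rewrite [RHS]big_mkcond; apply: eq_bigr => i _; case: ltnP => // Hi.
by rewrite (mulmx_expr_eq0_le uH Hi) bform0l scale0r.
Qed.

Lemma shearP_comm m z : z *m P ^+ m.+1 = 0 ->
  forall x, x *m P *m shear m z = x *m shear m z *m P.
Proof.
move=> zm x; rewrite !shear_vec mulmx_suml big_ord_recr big_ord_recl /=.
rewrite subnn subn0 -mulmxA mulmxE -exprS bform_adjX zm bform0r scale0r addr0.
rewrite -scalemxAl -mulmxA mulmxE -exprSr zm scaler0 add0r.
apply: eq_bigr => i _; rewrite /bump /= add1n.
by rewrite -scalemxAl -!mulmxA !mulmxE -exprS -exprSr subnSK.
Qed.

Lemma bform_shear m z x y :
  B (x *m (1%:M + shear m z)) (y *m (1%:M + shear m z)) = B x y.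
Proof.
rewrite !mulmxDr !mulmx1 !bformDl !bformDr.
have -> : B (x *m shear m z) (y *m shear m z) = 0.
  rewrite !shear_vec bform_suml big1 // => i _.
  rewrite bformZl bform_sumr big1 ?mulr0 // => j _.
  by rewrite bformZr bform_orbit0 mulr0.
have cross : B x (y *m shear m z) = - B (x *m shear m z) y.
  rewrite !shear_vec bform_sumr bform_suml -sumrN.
  rewrite (reindex_inj rev_ord_inj) /=; apply: eq_bigr => i _.
  rewrite bformZr bformZl -bform_adjX (bform_adjX _ z) (bform_skew alt z).
  by rewrite subSS subKn ?leq_ord // mulrN opprK mulrC.
by rewrite addr0 cross addrNK.
Qed.

Lemma in_Aut_shear m z : z *m P ^+ m.+1 = 0 -> in_Aut M P (1%:M + shear m z).
Proof.
move=> zm; split.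
- have GMG : (1%:M + shear m z) *m M *m (1%:M + shear m z)^T = M.
    apply: eq_bform => u v; have := bform_shear m z u v.
    by rewrite /bform trmx_mul !mulmxA => ->.
  have : (1%:M + shear m z) *m (M *m (1%:M + shear m z)^T) \in unitmx.
    by rewrite mulmxA GMG.
  by rewrite unitmx_mul => /andP[].
- by move=> u v; rewrite /app bform_shear.
- by move=> u; rewrite /app !mulmxDr !mulmx1 mulmxDl shearP_comm.
Qed.

Lemma Aut_invariant_shear W m z u : Aut_invariant M P W ->
  z *m P ^+ m.+1 = 0 -> (u <= W)%MS -> (u *m shear m z <= W)%MS.
Proof.
move=> HW zm uW; have := HW _ (in_Aut_shear zm) u uW.
by rewrite /app mulmxDr mulmx1 addrC submx_addr.
Qed.

Section Separation.
Variables (W : 'M[F]_n) (u w : 'rV[F]_n) (H l : nat).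
Hypotheses (HW : Aut_invariant M P W) (uW : (u <= W)%MS).
Hypotheses (uH : u *m P ^+ H.+1 = 0) (wHl : w *m P ^+ (H.+1 + l) = 0).
Hypothesis uHw : B (u *m P ^+ H) w != 0.
Let c i := B (u *m P ^+ i) w.

Lemma w_orbit_sub k : (w *m P ^+ (l + k) <= W)%MS.
Proof.
apply: (sub_triangular (c := c) (v := fun j => w *m P ^+ (l + j)) (K := H.+1) uHw)
  => [j Hj | j] /=.
  by apply: mulmx_expr_eq0_le wHl _; lia.
have wm : w *m P ^+ (H + l + j).+1 = 0 by apply: mulmx_expr_eq0_le wHl _; lia.
rewrite (eq_bigr (fun i : 'I_H.+1 => c i *: (w *m P ^+ (H + l + j - i)))) => [|i _].
  by rewrite -(shear_trunc (m := H + l + j) w uH) ?Aut_invariant_shear //; lia.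
by congr (_ *: (_ *m P ^+ _)); have := ltn_ord i; lia.
Qed.

Lemma cross_shear_sub y : y *m P ^+ (H.+1 + l) = 0 ->
  ((\sum_(i < H.+1) c i *: (y *m P ^+ (H + l - i)))%R <= W)%MS.
Proof.
move=> yHl.
pose S z y' := (\sum_(i < H.+1) B (u *m P ^+ i) z *: (y' *m P ^+ (H + l - i)))%R.
have SW z : z *m P ^+ (H.+1 + l) = 0 -> (S z z <= W)%MS.
  by move=> zHl; rewrite /S -shear_trunc ?Aut_invariant_shear // -?addSn //; lia.
have SywW : (S y w <= W)%MS.
  apply: summx_sub => i _; apply: scalemx_sub.
  by rewrite (_ : H + l - i = l + (H - i))%N ?w_orbit_sub //; have := ltn_ord i; lia.
have Sdec : S (w + y) (w + y) = S w w + S w y + (S y w + S y y).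
  rewrite /S -!big_split; apply: eq_bigr => i _.
  by rewrite bformDr mulmxDl scalerDl !scalerDr.
have := SW (w + y); rewrite mulmxDl wHl yHl addr0 Sdec => /(_ erefl).
rewrite submx_addr ?(addmx_sub SywW (SW y yHl)) // addrC submx_addr //.
exact: SW.
Qed.

Lemma KerX_capImX_sub : (kermx (P ^+ H.+1) :&: P ^+ l <= W)%MS.
Proof.
apply/row_subP => r; have := row_sub r (kermx (P ^+ H.+1) :&: P ^+ l)%MS.
rewrite sub_capmx => /andP[/sub_kermxP rK /submxP[y ry]]; rewrite ry in rK *.
have yHl : y *m P ^+ (H.+1 + l) = 0 by rewrite addnC mulmx_exprD rK.
rewrite -(addn0 l).
apply: (sub_triangular (c := c) (v := fun j => y *m P ^+ (l + j)) (K := H.+1) uHw).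
  by move=> j Hj; apply: mulmx_expr_eq0_le yHl _; lia.
move=> j; have := cross_shear_sub (y := y *m P ^+ j).
rewrite -mulmx_exprD => /(_ (mulmx_expr_eq0_le yHl (leq_addl _ _))).
congr (_ <= _)%MS; apply: eq_bigr => i _; rewrite -mulmx_exprD.
by congr (_ *: (_ *m P ^+ _)); have := ltn_ord i; lia.
Qed.

End Separation.

Section Decomposition.
Variables (W : 'M[F]_n) (k0 : nat).
Hypotheses (Pk0 : P ^+ k0 = 0) (HW : Aut_invariant M P W).
Let N := k0.+1.

(* Index i encodes the pair (i %/ N, i %% N) = (k, l); a piece not contained
   in W is replaced by Ker P^0 = 0. *)
Definition ker_index i :=
  if (KerPow P (i %/ N) :&: ImPow P (i %% N) <= W)%MS then (i %/ N)%N else 0%N.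

Definition decomp := (\sum_(i < N * N) (KerPow P (ker_index i) :&: ImPow P (i %% N)))%MS.

Lemma decomp_sub : (decomp <= W)%MS.
Proof.
apply/sumsmx_subP => i _; rewrite /ker_index /KerPow; case: ifP => // _.
have /eqP -> : kermx (P ^+ 0) == 0 by rewrite kermx_eq0 expr0 row_free_unit unitmx1.
by rewrite cap0mx sub0mx.
Qed.

Lemma piece_sub_decomp k l : (k < N)%N -> (l < N)%N ->
  (KerPow P k :&: ImPow P l <= W)%MS -> (KerPow P k :&: ImPow P l <= decomp)%MS.
Proof.
move=> kN lN klW; have i_lt : (k * N + l < N * N)%N by nia.
apply: (sumsmx_sup (Ordinal i_lt)) => //=.
by rewrite /ker_index divnMDl // divn_small // addn0 modnMDl modn_small // klW.
Qed.

Lemma height_sub_decomp h u : (u <= W)%MS -> u *m P ^+ h = 0 -> (u <= decomp)%MS.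
Proof.
elim: h u => [|h IH] u uW uh; first by rewrite expr0 mulmx1 in uh; rewrite uh sub0mx.
have [uh0|zn0] := eqVneq (u *m P ^+ h) 0; first exact: IH.
have [l [hlk zl zNl]] := exists_max_ImX Pk0 zn0 (submxMl u _).
have [w wl uw] := KerX_witness zNl.
have pieceW : (kermx (P ^+ h.+1) :&: P ^+ l <= W)%MS.
  by apply: (KerX_capImX_sub HW uW uh _ uw); rewrite addSn.
have [y zy] := submxP zl.
have a_piece : (y *m P ^+ l <= kermx (P ^+ h.+1) :&: P ^+ l)%MS.
  rewrite sub_capmx submxMl andbT; apply/sub_kermxP; rewrite -mulmx_exprD.
  have -> : (l + h.+1 = h + l + 1)%N by lia.
  by rewrite mulmx_exprD -zy -mulmx_exprD addn1.
rewrite -(subrK (y *m P ^+ l) u) addmx_sub //.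
  apply: IH; first by rewrite addmx_sub ?eqmx_opp // (submx_trans a_piece).
  by rewrite mulmxBl -mulmx_exprD addnC zy subrr.
by apply: submx_trans a_piece (piece_sub_decomp _ _ pieceW); lia.
Qed.

Lemma Aut_invariant_decomp : (W == decomp)%MS.
Proof.
apply/andP; split; last exact: decomp_sub.
apply/row_subP => r; apply: (height_sub_decomp (h := k0)); first exact: row_sub.
by rewrite Pk0 mulmx0.
Qed.

End Decomposition.

End Alternating.

End SelfAdjoint.

Lemma Aut_invariant_sum_KerX_capImX (F : fieldType) n (M P W : 'M[F]_n) :
  (2%:R : F) != 0 -> symplectic M -> nilpotent P -> self_adjoint M P ->
  Aut_invariant M P W ->
  exists (s : nat) (k l : 'I_s -> nat),
    (W == \sum_(i < s) (KerPow P (k i) :&: ImPow P (l i)))%MS.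
Proof.
move=> two_neq0 [alt M_unit] [k0 Pk0] adjP HW.
exists (k0.+1 * k0.+1)%N, (ker_index P W k0), (fun i => i %% k0.+1)%N.
exact: Aut_invariant_decomp.
Qed.

Lemma theorem7_over_numField (F : numFieldType) n : theorem7_over F n.
Proof. by move=> M P W; apply: Aut_invariant_sum_KerX_capImX; rewrite pnatr_eq0. Qed.

Theorem theorem7 :
  forall (R : realType) (n : nat),
    theorem7_over R n /\ theorem7_over R[i] n.
Proof. by move=> R n; split; apply: theorem7_over_numField. Qed.
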